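(* Let $p$ be a prime, $X$ a countable set, and let $A\in\mathcal{B}(\mathbb{Q}_p(X))$ be a normal contraction. Then there is a contractive homomorphism of $\mathbb{Z}_p$-algebras $\pi_A: C(\mathbb{Z}_p,\mathbb{Z}_p)\to\mathcal{B}(\mathbb{Q}_p(X))$ with $\pi_A(\mathrm{id}_{\mathbb{Z}_p})=A$, where $C(\mathbb{Z}_p,\mathbb{Z}_p)$ carries the supremum norm.
   Context: $\mathbb{Q}_p(X)$ is the set of maps $\xi:X\to\mathbb{Q}_p$ with $|\xi(i)|_p\le1$ for all but finitely many $i$, a $\mathbb{Z}_p$-module under coordinatewise operations, with the topology $\tau$ in which $A\subseteq\mathbb{Q}_p(X)$ is open iff for every finite $P\subseteq X$ the set $A\cap\big(\prod_{i\in P}\mathbb{Q}_p\times\prod_{j\in X\setminus P}\mathbb{Z}_p\big)$ is open in the product topology. $\mathcal{B}(\mathbb{Q}_p(X))$ is the $\mathbb{Z}_p$-algebra of $\tau$-continuous $\mathbb{Z}_p$-linear maps on $\mathbb{Q}_p(X)$ with operator norm $\|T\|=\sup_{\|\xi\|\le1}\|T\xi\|$, $\|\xi\|=\max_i|\xi(i)|_p$. An operator $A\in\mathcal{B}(\mathbb{Q}_p(X))$ is a normal contraction if for every $n\in\mathbb{N}$ the quotient $\binom{A}{n}:=\frac{A(A-1)\cdots(A-(n-1))}{n!}$ is defined as an element of $\mathcal{B}(\mathbb{Q}_p(X))$ (i.e. there is an operator $B$ in $\mathcal{B}(\mathbb{Q}_p(X))$ with $n!\,B=A(A-1)\cdots(A-(n-1))$)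 and satisfies $\|\binom{A}{n}\|\le1$. $C(\mathbb{Z}_p,\mathbb{Z}_p)$ is the $\mathbb{Z}_p$-algebra of continuous functions $\mathbb{Z}_p\to\mathbb{Z}_p$; contractive means $\|\pi_A(f)\|\le\|f\|_{\sup}$. *)

From HB Require Import structures.
From mathcomp Require Import all_boot all_order all_algebra.
From mathcomp Require Import reals.
Set Implicit Arguments. Unset Strict Implicit. Unset Printing Implicit Defensive.
Import Order.TTheory GRing.Theory Num.Theory.
Local Open Scope ring_scope.

(* The field Q_p, given by its characterizing properties:             *)
(* K is complete. This determines (K, v) up to isometric isomorphism  *)
(* as (Q_p, |.|_p).                                                   *)
Record is_Qp (R : realType) (p : nat) (K : fieldType) (v : K -> R) : Prop := {
  Qp_ge0 : forall x, 0 <= v x;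
  Qp_eq0 : forall x, v x = 0 <-> x = 0;
  Qp_mul : forall x y, v (x * y) = v x * v y;
  Qp_ultra : forall x y, v (x + y) <= Num.max (v x) (v y);
  Qp_vp : v (p%:R) = (p%:R)^-1;
  Qp_vunit : forall n : nat, coprime n p -> v (n%:R) = 1;
  Qp_dense : forall (x : K) (e : R), 0 < e -> exists q : rat, v (x - ratr q) < e;
  Qp_complete : forall u : nat -> K,
    (forall e : R, 0 < e -> exists N : nat, forall m n : nat,
        (N <= m)%N -> (N <= n)%N -> v (u m - u n) < e) ->
    exists l : K, forall e : R, 0 < e -> exists N : nat, forall n : nat,
        (N <= n)%N -> v (u n - l) < e
}.

Section Defs.
Variables (R : realType) (K : fieldType) (v : K -> R) (X : countType).

Definition Zp_elem (a : K) : Prop := v a <= 1.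

Definition inQpX (xi : X -> K) : Prop :=
  exists s : seq X, forall i, 1 < v (xi i) -> i \in s.

Definition inEP (P : seq X) (xi : X -> K) : Prop :=
  forall j, j \notin P -> v (xi j) <= 1.

Definition open_EP (P : seq X) (U : (X -> K) -> Prop) : Prop :=
  forall xi, U xi -> exists (F : seq X) (e : R), 0 < e /\
    forall eta, inEP P eta -> (forall i, i \in F -> v (eta i - xi i) < e) -> U eta.

Definition tau_open (A : (X -> K) -> Prop) : Prop :=
  (forall xi, A xi -> inQpX xi) /\
  forall P : seq X, open_EP P (fun xi => A xi /\ inEP P xi).

(* operators are represented by functions (X -> K) -> (X -> K);
   only their values on Q_p(X) matter *)
Definition Op := (X -> K) -> (X -> K).

Definition eqOp (S T : Op) : Prop := forall xi, inQpX xi -> S xi = T xi.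

Definition isBop (T : Op) : Prop :=
  [/\ forall xi, inQpX xi -> inQpX (T xi),
      forall xi eta, inQpX xi -> inQpX eta ->
        T (fun i => xi i + eta i) = (fun i => T xi i + T eta i),
      forall (a : K) xi, Zp_elem a -> inQpX xi ->
        T (fun i => a * xi i) = (fun i => a * T xi i) &
      forall U, tau_open U -> tau_open (fun xi => inQpX xi /\ U (T xi))].

Definition opnorm_le (T : Op) (c : R) : Prop :=
  forall xi, inQpX xi -> (forall i, v (xi i) <= 1) -> forall i, v (T xi i) <= c.

Fixpoint falling (A : Op) (n : nat) : Op :=
  match n with
  | 0 => fun xi => xi
  | m.+1 => fun xi => let eta := falling A m xi in
                      fun i => A eta i - m%:R * eta i
  end.

Definition normal_contraction (A : Op) : Prop :=
  forall n : nat, exists B : Op,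
    [/\ isBop B, eqOp (fun xi i => n`!%:R * B xi i) (falling A n) & opnorm_le B 1].

(* C(Z_p, Z_p): functions K -> K mapping Z_p into Z_p, continuous on Z_p
   (only their restriction to Z_p matters) *)
Definition CZpZp (f : K -> K) : Prop :=
  (forall x, Zp_elem x -> Zp_elem (f x)) /\
  forall x, Zp_elem x -> forall e : R, 0 < e -> exists d : R, 0 < d /\
    forall y, Zp_elem y -> v (y - x) < d -> v (f y - f x) < e.

End Defs.

From HB Require Import structures.
From mathcomp Require Import all_boot all_order all_algebra.
From mathcomp Require Import reals.
From mathcomp Require Import ring lra zify.
From Stdlib Require Import ClassicalEpsilon FunctionalExtensionality.
Import Order.TTheory GRing.Theory Num.Theory.
Local Open Scope ring_scope.
Set Implicit Arguments. Unset Strict Implicit. Unset Printing Implicit Defensive.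

(* A continuous f : Z_p -> Z_p is the sum of its Mahler series
   f(x) = sum_n a_n C(x, n), a_n = (Delta^n f)(0).  The a_n are p-adic integers
   tending to 0: f is uniformly continuous (Z_p is compact), and since p divides
   C(p^m, i) for 0 < i < p^m, Delta^(p^m) gains a factor 1/p up to the modulus of
   continuity of f.  As ||C(A, n)|| <= 1, pi_A(f) := sum_n a_n C(A, n) converges,
   with ||pi_A(f)|| <= sup_n |a_n| <= ||f||.  Additivity, pi_A(1) = 1 and
   pi_A(id) = A are read off the coefficients.  For multiplicativity it suffices
   to compose truncated series: by A C(A, k) = k C(A, k) + (k + 1) C(A, k + 1),
   C(A, i) acts on combinations of the C(A, k) as multiplication by C(x, i) acts
   on the functions sum_k s_k C(x, k) on N, and the coefficients of such a
   function are integral whenever its values are.  Finally pi_A(f) is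
   tau-continuous, being the uniform limit on bounded sets of the finite
   combinations of the tau-continuous operators C(A, k). *)

Section FiniteDifferences.
Variable V : zmodType.
Implicit Types g h : nat -> V.

Definition fdiff g : nat -> V := fun x => g x.+1 - g x.
Definition fdiffn n g : nat -> V := iter n fdiff g.

Lemma fdiffnS n g : fdiffn n.+1 g = fdiff (fdiffn n g). Proof. by []. Qed.
Lemma fdiffnSr n g : fdiffn n.+1 g = fdiffn n (fdiff g). Proof. exact: iterSr. Qed.
Lemma fdiffnD m n g : fdiffn (m + n) g = fdiffn m (fdiffn n g). Proof. exact: iterD. Qed.

Lemma fdiffn_add n g h :
  fdiffn n (fun x => g x + h x) = (fun x => fdiffn n g x + fdiffn n h x).
Proof.
elim: n => // n IH; rewrite !fdiffnS IH; apply: functional_extensionality => x.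
by rewrite /fdiff opprD addrACA.
Qed.

Lemma fdiffn_sub n g h :
  fdiffn n (fun x => g x - h x) = (fun x => fdiffn n g x - fdiffn n h x).
Proof.
elim: n => // n IH; rewrite !fdiffnS IH; apply: functional_extensionality => x.
by rewrite /fdiff !opprD addrACA.
Qed.

Lemma fdiffn_shift n q g :
  fdiffn n (fun x => g (x + q)%N) = (fun x => fdiffn n g (x + q)%N).
Proof.
elim: n => // n IH; rewrite !fdiffnS IH; apply: functional_extensionality => x.
by rewrite /fdiff addSn.
Qed.

Lemma fdiffn_const n c : fdiffn n.+1 (fun _ => c) = (fun _ => 0).
Proof.
elim: n => [|n IH]; last by rewrite fdiffnS IH /fdiff subrr.
by apply: functional_extensionality => x; rewrite /fdiffn /= /fdiff subrr.
Qed.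

Lemma newton_interpolation m g :
  g m = \sum_(0 <= i < m.+1) fdiffn i g 0 *+ 'C(m, i).
Proof.
elim: m g => [|m IH] g; first by rewrite big_nat1 bin0.
have -> : g m.+1 = g m + fdiff g m by rewrite /fdiff addrC subrK.
rewrite (IH g) (IH (fdiff g)) [in RHS]big_nat_recl // bin0.
under [in RHS]eq_bigr => i _ do rewrite binS mulrnDr.
rewrite big_split /= addrA; congr (_ + _); last first.
  by apply: eq_bigr => i _; rewrite -fdiffnS fdiffnSr.
by rewrite big_nat_recl // bin0 [in RHS]big_nat_recr //= bin_small // mulr0n addr0.
Qed.

End FiniteDifferences.

Lemma fdiffn_mull (V : ringType) a n (g : nat -> V) :
  fdiffn n (fun x => a * g x) = (fun x => a * fdiffn n g x).
Proof.
elim: n => // n IH; rewrite !fdiffnS IH; apply: functional_extensionality => x.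
by rewrite /fdiff mulrBr.
Qed.

Lemma fdiffn_sum (V : comRingType) n (g : nat -> V) x :
  fdiffn n g x = \sum_(0 <= i < n.+1) (-1) ^+ (n + i) * 'C(n, i)%:R * g (x + i)%N.
Proof.
elim: n x => [|n IH] x; first by rewrite big_nat1 !addn0 expr0 !mul1r.
rewrite fdiffnS /fdiff !IH.
set S := fun y => \sum_(0 <= i < n) (-1) ^+ (n + i.+1) * 'C(n, i.+1)%:R * g (y + i.+1)%N.
have -> : \sum_(0 <= i < n.+1) (-1) ^+ (n + i) * 'C(n, i)%:R * g (x + i)%N =
    (-1) ^+ n * g x + S x.
  by rewrite big_nat_recl // !addn0 bin0 mulr1.
have -> : \sum_(0 <= i < n.+2) (-1) ^+ (n.+1 + i) * 'C(n.+1, i)%:R * g (x + i)%N =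
    - ((-1) ^+ n * g x) + \sum_(0 <= i < n.+1) (-1) ^+ (n + i) * 'C(n, i)%:R * g (x.+1 + i)%N
    + \sum_(0 <= i < n.+1) (-1) ^+ (n + i) * 'C(n, i.+1)%:R * g (x + i.+1)%N.
  rewrite big_nat_recl // !addn0 bin0 exprS mulN1r !mulNr mulr1 -addrA -big_split /=.
  congr (_ + _); apply: eq_bigr => i _.
  by rewrite binS natrD addSn addnS !exprS !mulN1r [(x.+1 + i)%N]addSnnS; ring.
have -> : \sum_(0 <= i < n.+1) (-1) ^+ (n + i) * 'C(n, i.+1)%:R * g (x + i.+1)%N = - S x.
  rewrite big_nat_recr //= bin_small // mulr0 mul0r addr0 -sumrN.
  by rewrite /S; apply: eq_bigr => i _; rewrite [(n + i.+1)%N]addnS exprS; ring.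
ring.
Qed.

Lemma natr_mul_bin_left (V : ringType) m k :
  k.+1%:R * 'C(m, k.+1)%:R = (m%:R - k%:R) * 'C(m, k)%:R :> V.
Proof.
have [km|mk] := leqP k m; first by rewrite -natrB // -!natrM mul_bin_left.
by rewrite !bin_small ?mulr0 // ltnW.
Qed.

Lemma sum_pred_shift (V : comRingType) L (u F : nat -> V) c : u L = 0 ->
  \sum_(0 <= k < L.+1) ((k%:R - c) * u k + k%:R * u k.-1) * F k =
  \sum_(0 <= k < L) u k * ((k%:R - c) * F k + k.+1%:R * F k.+1).
Proof.
move=> uL; under eq_bigr => k _ do rewrite mulrDl.
rewrite big_split /= big_nat_recr //= uL mulr0 mul0r addr0.
rewrite [X in _ + X]big_nat_recl //= !mul0r add0r -big_split /=.
by apply: eq_bigr => k _; ring.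
Qed.

Lemma prime_dvd_bin_pow p m i :
  prime p -> (0 < i)%N -> (i < p ^ m)%N -> (p %| 'C(p ^ m, i))%N.
Proof.
move=> pr_p i0 im; apply: contraT => ndvd.
have cop : coprime (p ^ m) 'C(p ^ m, i) by apply: coprimeXl; rewrite prime_coprime.
have e := mul_bin_diag (p ^ m) i.-1; rewrite prednK // in e.
have : (p ^ m %| i * 'C(p ^ m, i))%N by rewrite -e dvdn_mulr.
by rewrite mulnC Gauss_dvdr // => /(dvdn_leq i0); rewrite leqNgt im.
Qed.

Lemma eventually_forall_lt (n : nat) (P : nat -> nat -> Prop) :
  (forall t, (t < n)%N -> exists M, forall m, (M <= m)%N -> P t m) ->
  exists M, forall t, (t < n)%N -> forall m, (M <= m)%N -> P t m.
Proof.
elim: n => [|n IH] h; first by exists 0%N.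
have [M1 H1] := IH (fun t ht => h t (ltnW ht)).
have [M2 H2] := h n (ltnSn n).
exists (maxn M1 M2) => t; rewrite ltnS leq_eqVlt => /orP[/eqP -> | ht] m.
  by rewrite geq_max => /andP[_]; exact: H2.
by rewrite geq_max => /andP[hm _]; exact: H1.
Qed.

Lemma half_divM_lt (R : realFieldType) (c y : R) : 0 < c -> 0 < y -> c / (2 * y) * y < c.
Proof.
move=> c0 y0; have -> : c / (2 * y) * y = c / 2 by field; rewrite gt_eqF.
lra.
Qed.

Section PadicField.
Variables (R : realType) (p : nat) (K : fieldType) (v : K -> R).
Hypothesis HK : is_Qp p v.
Hypothesis pr_p : prime p.

Local Notation r := (p%:R : R).

Lemma v_ge0 x : 0 <= v x. Proof. exact: Qp_ge0 HK x. Qed.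
Lemma v0 : v 0 = 0. Proof. exact/(Qp_eq0 HK). Qed.
Lemma v_eq0 x : v x = 0 <-> x = 0. Proof. exact: Qp_eq0 HK x. Qed.
Lemma vM x y : v (x * y) = v x * v y. Proof. exact: Qp_mul HK x y. Qed.

Lemma v_gt0 x : x != 0 -> 0 < v x.
Proof. by move=> /eqP nx; rewrite lt_def v_ge0 andbT; apply/eqP => /v_eq0. Qed.

Lemma v1 : v 1 = 1.
Proof.
have h1 : v 1 != 0 by apply/eqP => /v_eq0 /eqP; rewrite oner_eq0.
by apply: (mulfI h1); rewrite mulr1 -vM mulr1.
Qed.

Lemma vN1 : v (-1) = 1.
Proof.
have h := vM (-1) (-1); rewrite mulrNN mulr1 v1 in h.
have := v_ge0 (-1); nra.
Qed.

Lemma vN x : v (- x) = v x. Proof. by rewrite -mulN1r vM vN1 mul1r. Qed.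
Lemma vBC x y : v (x - y) = v (y - x). Proof. by rewrite -vN opprB. Qed.

Lemma vD_le x y c : v x <= c -> v y <= c -> v (x + y) <= c.
Proof. by move=> hx hy; apply: le_trans (Qp_ultra HK x y) _; rewrite ge_max hx hy. Qed.

Lemma vD_lt x y c : v x < c -> v y < c -> v (x + y) < c.
Proof. by move=> hx hy; apply: le_lt_trans (Qp_ultra HK x y) _; rewrite gt_max hx hy. Qed.

Lemma vB_le x y c : v x <= c -> v y <= c -> v (x - y) <= c.
Proof. by move=> hx hy; apply: vD_le; rewrite ?vN. Qed.

Lemma vB_lt x y c : v x < c -> v y < c -> v (x - y) < c.
Proof. by move=> hx hy; apply: vD_lt; rewrite ?vN. Qed.

Lemma v_sum_le (I : Type) (s : seq I) (P : pred I) (F : I -> K) c :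
  0 <= c -> (forall i, P i -> v (F i) <= c) -> v (\sum_(i <- s | P i) F i) <= c.
Proof.
move=> c0 h; apply: (big_ind (fun x => v x <= c)); rewrite ?v0 // => x y.
exact: vD_le.
Qed.

Lemma v_sum_lt (I : Type) (s : seq I) (P : pred I) (F : I -> K) c :
  0 < c -> (forall i, P i -> v (F i) < c) -> v (\sum_(i <- s | P i) F i) < c.
Proof.
move=> c0 h; apply: (big_ind (fun x => v x < c)); rewrite ?v0 // => x y.
exact: vD_lt.
Qed.

Lemma v_nat_le1 n : v n%:R <= 1.
Proof.
elim: n => [|n IH]; first by rewrite v0 ler01.
by rewrite -addn1 natrD; apply: vD_le; rewrite ?v1.
Qed.

Lemma vM_le x y a b : v x <= a -> v y <= b -> 0 <= a -> v (x * y) <= a * b.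
Proof.
move=> hx hy a0; rewrite vM; apply: le_trans (ler_wpM2l (v_ge0 x) hy) _.
by apply: ler_wpM2r => //; apply: le_trans (v_ge0 y) hy.
Qed.

Lemma vM_le1 x y b : v x <= 1 -> v y <= b -> v (x * y) <= b.
Proof. by move=> hx hy; rewrite -[b]mul1r vM_le. Qed.

Lemma vV x : x != 0 -> v x^-1 = (v x)^-1.
Proof.
move=> nx; have hx : v x != 0 by rewrite gt_eqF // v_gt0.
by apply: (mulfI hx); rewrite -vM !mulfV // v1.
Qed.

Lemma vX x n : v (x ^+ n) = v x ^+ n.
Proof. by elim: n => [|n IH]; rewrite ?v1 // !exprS vM IH. Qed.

Lemma v_sign k : v ((-1) ^+ k) = 1. Proof. by rewrite vX vN1 expr1n. Qed.

Lemma r_gt0 : 0 < r. Proof. by rewrite ltr0n prime_gt0. Qed.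
Lemma rinv_ge0 : 0 <= r^-1. Proof. by rewrite invr_ge0 ltW // r_gt0. Qed.
Lemma rinv_le_half : r^-1 <= 2^-1.
Proof. by rewrite lef_pV2 ?posrE ?r_gt0 // ler_nat prime_gt1. Qed.

Lemma vp : v p%:R = r^-1. Proof. exact: Qp_vp HK. Qed.
Lemma vpX n : v (p%:R ^+ n) = r^-1 ^+ n. Proof. by rewrite vX vp. Qed.

Lemma v_nat_dvd k n : (p ^ k %| n)%N -> v n%:R <= r^-1 ^+ k.
Proof.
move=> /dvdnP[m ->]; rewrite natrM natrX vM vpX -[leRHS]mul1r.
by rewrite ler_wpM2r ?v_nat_le1 // exprn_ge0 // rinv_ge0.
Qed.

Lemma v_natB_mod k a b : a = b %[mod p ^ k] -> v (a%:R - b%:R) <= r^-1 ^+ k.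
Proof.
wlog ba : a b / (b <= a)%N => [W h|h].
  by case: (leqP b a) => hab; [exact: W | rewrite vBC W // ltnW].
by rewrite -natrB // v_nat_dvd // -eqn_mod_dvd //; apply/eqP.
Qed.

Lemma natr_neq0 n : (0 < n)%N -> n%:R != 0 :> K.
Proof.
elim/ltn_ind: n => n IH n0; case pn: (p %| n)%N.
  have [m em] := dvdnP pn; move: n0; rewrite em muln_gt0 => /andP[m0 _].
  rewrite natrM mulf_neq0 //; first by apply: IH; rewrite // em ltn_Pmulr ?prime_gt1.
  by apply/eqP => hp; move: vp; rewrite hp v0 => /esym/eqP; rewrite invr_eq0 gt_eqF ?r_gt0.
have /(Qp_vunit HK) : coprime n p by rewrite coprime_sym prime_coprime // pn.
by move=> hv; apply/eqP => hn; move: hv; rewrite hn v0 => /esym/eqP; rewrite oner_eq0.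
Qed.

Lemma rinvX_small e : 0 < e -> exists k, r^-1 ^+ k < e.
Proof.
move=> e0; have /archi_boundP : 0 <= e^-1 by rewrite invr_ge0 ltW.
set n := Num.Def.archi_bound _ => hn; exists n.
rewrite exprVn -(invrK e) ltf_pV2 ?posrE ?invr_gt0 ?exprn_gt0 ?r_gt0 //.
by apply: lt_trans hn _; rewrite -natrX ltr_nat ltn_expl // prime_gt1.
Qed.

Lemma exists_small_multiple b eps : b != 0 -> 0 < eps ->
  exists (e : R) (b' : K), [/\ 0 < e, b' != 0, v b' = e * v b & e * v b < eps].
Proof.
move=> b0 eps0; have [j hj] := rinvX_small (divr_gt0 eps0 (v_gt0 b0)).
exists (r^-1 ^+ j), (p%:R ^+ j * b); split; last by rewrite -ltr_pdivlMr ?v_gt0.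
- by rewrite exprn_gt0 // invr_gt0 r_gt0.
- by rewrite mulf_neq0 // expf_neq0 // natr_neq0 // prime_gt0.
- by rewrite vM vpX.
Qed.

Definition cvgK (u : nat -> K) (l : K) :=
  forall e, 0 < e -> exists N, forall n, (N <= n)%N -> v (u n - l) < e.
Definition cauchyK (u : nat -> K) :=
  forall e, 0 < e -> exists N, forall m n, (N <= m)%N -> (N <= n)%N -> v (u m - u n) < e.
Definition limK (u : nat -> K) : K := epsilon (inhabits 0) (cvgK u).

Lemma eq0_v_small x : (forall e, 0 < e -> v x < e) -> x = 0.
Proof.
move=> h; apply/v_eq0/eqP; rewrite eq_le v_ge0 andbT leNgt.
by apply/negP => /h; rewrite ltxx.
Qed.

Lemma cvgK_unique u l1 l2 : cvgK u l1 -> cvgK u l2 -> l1 = l2.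
Proof.
move=> h1 h2; apply/eqP; rewrite -subr_eq0; apply/eqP/eq0_v_small => e e0.
have [N1 H1] := h1 e e0; have [N2 H2] := h2 e e0.
have -> : l1 - l2 = (u (maxn N1 N2) - l2) - (u (maxn N1 N2) - l1) by ring.
by apply: vB_lt; [apply: H2 | apply: H1]; rewrite ?leq_maxl ?leq_maxr.
Qed.

Lemma cvgK_limK u : cauchyK u -> cvgK u (limK u).
Proof.
move=> h; have [l hl] := Qp_complete HK h.
by rewrite /limK; apply: epsilon_spec; exists l; exact: hl.
Qed.

Lemma limKE u l : cvgK u l -> limK u = l.
Proof.
move=> h; have hl : cvgK u (limK u) by rewrite /limK; apply: epsilon_spec; exists l.
exact: cvgK_unique hl h.
Qed.

Lemma limK_eventually u c : (exists N, forall n, (N <= n)%N -> u n = c) -> limK u = c.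
Proof. by move=> [N hN]; apply: limKE => e e0; exists N => n /hN ->; rewrite subrr v0. Qed.

Lemma eq_cvgK u w l : (forall n, u n = w n) -> cvgK w l -> cvgK u l.
Proof. by move=> /functional_extensionality ->. Qed.

Lemma cvgKD u w l1 l2 : cvgK u l1 -> cvgK w l2 -> cvgK (fun n => u n + w n) (l1 + l2).
Proof.
move=> h1 h2 e e0; have [N1 H1] := h1 e e0; have [N2 H2] := h2 e e0.
exists (maxn N1 N2) => n; rewrite geq_max => /andP[hn1 hn2].
have -> : u n + w n - (l1 + l2) = (u n - l1) + (w n - l2) by ring.
by apply: vD_lt; [apply: H1 | apply: H2].
Qed.

Lemma cvgKMl a u l : cvgK u l -> cvgK (fun n => a * u n) (a * l).
Proof.
move=> h e e0; have [->|a0] := eqVneq a 0.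
  by exists 0%N => n _; rewrite !mul0r subrr v0.
have va := v_gt0 a0; have [N HN] := h (e / v a) (divr_gt0 e0 va).
exists N => n /HN hn; rewrite -mulrBr vM.
by rewrite -ltr_pdivlMl // mulrC.
Qed.

Lemma cvgK_dist_le u l w c : cvgK u l ->
  (exists N, forall n, (N <= n)%N -> v (u n - w) <= c) -> v (l - w) <= c.
Proof.
move=> h [N HN]; rewrite leNgt; apply/negP => hc.
have [N1 H1] : exists N1, forall n, (N1 <= n)%N -> v (u n - l) < v (l - w) - c.
  by apply: h; rewrite subr_gt0.
set n := maxn N N1; have h1 := H1 n (leq_maxr _ _); have h2 := HN n (leq_maxl _ _).
have : v (l - w) <= Num.max (v (l - u n)) (v (u n - w)).
  by have := Qp_ultra HK (l - u n) (u n - w); rewrite addrA subrK.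
rewrite vBC in h1; have := v_ge0 (l - u n); have := v_ge0 (u n - w).
by rewrite le_max => g1 g2 /orP[] hh; lra.
Qed.

Lemma fdiffn_le n g c : (forall x, v (g x) <= c) -> forall x, v (fdiffn n g x) <= c.
Proof.
elim: n g => [|n IH] g hg x; first exact: hg.
by rewrite fdiffnSr; apply: IH => y; apply: vB_le.
Qed.

Lemma v_sign_ppow_add1 m : v ((-1) ^+ (p ^ m) + 1) <= r^-1.
Proof.
have [p2|p_odd] := even_prime pr_p.
  case: m => [|m]; first by rewrite expn0 addNr v0 rinv_ge0.
  by rewrite -signr_odd oddX p2 /= expr0 -[1 + 1]/(2%:R) -p2 vp.
by rewrite -signr_odd oddX p_odd orbT addNr v0 rinv_ge0.
Qed.

(* In the alternating sum for the [p ^ m]-th difference the end terms give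
   [g (x + p ^ m) - g x] up to [((-1) ^+ p ^ m + 1) * g x], and p divides all
   the inner binomial coefficients. *)
Lemma fdiffn_ppow_le m g c d : 0 <= c -> 0 <= d ->
  (forall x, v (g x) <= c) -> (forall x, v (g (x + p ^ m)%N - g x) <= d) ->
  forall x, v (fdiffn (p ^ m) g x) <= d + c * r^-1.
Proof.
move=> c0 d0 hg hd x.
have cr : 0 <= c * r^-1 by rewrite mulr_ge0 // rinv_ge0.
have [q eq] : exists q, (p ^ m = q.+1)%N by exists (p ^ m).-1; rewrite prednK // expn_gt0 prime_gt0.
rewrite fdiffn_sum eq in hd *; rewrite big_nat_recl // big_nat_recr //= binn bin0.
rewrite !mulr1 !addn0 addnn -muln2 exprM sqrr_sign mul1r.
set M := \sum_(0 <= i < q) _.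
have -> : (-1) ^+ q.+1 * g x + (M + g (x + q.+1)%N) =
          (g (x + q.+1)%N - g x) + (((-1) ^+ q.+1 + 1) * g x + M) by ring.
apply: vD_le; first by rewrite (le_trans (hd x)) // lerDl.
have hcd : c * r^-1 <= d + c * r^-1 by rewrite lerDr.
apply: le_trans hcd; apply: vD_le.
  by rewrite mulrC vM_le // -eq v_sign_ppow_add1.
rewrite /M big_seq_cond; apply: v_sum_le => // i /andP[]; rewrite mem_index_iota => /andP[_ hi] _.
rewrite mulrC vM_le // vM v_sign mul1r -[r^-1]expr1 v_nat_dvd // expn1 -eq.
by apply: prime_dvd_bin_pow; rewrite // eq ltnS.
Qed.

Lemma fdiffn_mul_ppow_le m g d : 0 <= d -> (forall x, v (g x) <= 1) ->
  (forall x, v (g (x + p ^ m)%N - g x) <= d) ->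
  forall j x, v (fdiffn (j * p ^ m) g x) <= 2 * d + r^-1 ^+ j.
Proof.
move=> d0 hg hd; elim=> [|j IH] x.
  by rewrite mul0n expr0; apply: le_trans (hg x) _; rewrite lerDr mulr_ge0.
have hj : 0 <= r^-1 ^+ j by rewrite exprn_ge0 ?rinv_ge0.
have hper y : v (fdiffn (j * p ^ m) g (y + p ^ m)%N - fdiffn (j * p ^ m) g y) <= d.
  have := congr1 (fun h => h y) (fdiffn_sub (j * p ^ m) (fun z => g (z + p ^ m)%N) g).
  by rewrite fdiffn_shift /= => <-; apply: fdiffn_le.
rewrite mulSn fdiffnD; apply: le_trans (fdiffn_ppow_le _ d0 IH hper x) _.
  by rewrite addr_ge0 ?mulr_ge0.
have := rinv_le_half; have := rinv_ge0; rewrite exprSr; nra.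
Qed.

Lemma fdiffn0_vanish g : (forall x, v (g x) <= 1) ->
  (forall d, 0 < d -> exists m, forall x, v (g (x + p ^ m)%N - g x) <= d) ->
  forall e, 0 < e -> exists N, forall n, (N <= n)%N -> v (fdiffn n g 0%N) <= e.
Proof.
move=> hg hu e e0.
have [m hm] := hu (e / 4) (divr_gt0 e0 (ltr0Sn _ 3)).
have [j hj] := rinvX_small (divr_gt0 e0 (ltr0Sn _ 1)).
exists (j * p ^ m)%N => n hn; rewrite -(subnK hn) fdiffnD.
have : forall x, v (fdiffn (j * p ^ m) g x) <= 2 * (e / 4) + r^-1 ^+ j.
  by apply: fdiffn_mul_ppow_le => //; lra.
by move=> /(fdiffn_le (n - j * p ^ m)) /(_ 0%N); lra.
Qed.

Definition frequent_residue (xs : nat -> nat) k c :=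
  forall M, exists2 m, (M <= m)%N & (xs m %% p ^ k = c)%N.

Lemma frequent_residue_lift xs k c : frequent_residue xs k c ->
  exists2 t, (t < p)%N & frequent_residue xs k.+1 (c + t * p ^ k).
Proof.
move=> hc; apply: NNPP => hno.
have [M HM] : exists M, forall t, (t < p)%N -> forall m, (M <= m)%N ->
    (xs m %% p ^ k.+1 != c + t * p ^ k)%N.
  apply: eventually_forall_lt => t ht; apply: NNPP => hM; apply: hno; exists t => // M'.
  apply: NNPP => hM'; apply: hM; exists M' => m hm.
  by apply/eqP => e; apply: hM'; exists m.
have [m hm hmod] := hc M.
set w := (xs m %% p ^ k.+1)%N.
have hw : (w %% p ^ k = c)%N by rewrite /w modn_dvdm ?dvdn_exp2l.
have ht : (w %/ p ^ k < p)%N.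
  by rewrite ltn_divLR ?expn_gt0 ?prime_gt0 // -expnS /w ltn_mod expn_gt0 prime_gt0.
by move: (HM _ ht m hm); rewrite -/w {1}(divn_eq w (p ^ k)) hw addnC eqxx.
Qed.

Lemma frequent_residue_chain xs : exists cs : nat -> nat, forall k,
  [/\ (cs k < p ^ k)%N, frequent_residue xs k (cs k) &
      forall j, (j <= k)%N -> (cs k %% p ^ j = cs j)%N].
Proof.
pose tsel k c := epsilon (inhabits 0%N)
  (fun t => (t < p)%N /\ frequent_residue xs k.+1 (c + t * p ^ k)).
pose fix cs k := if k is k'.+1 then (cs k' + tsel k' (cs k') * p ^ k')%N else 0%N.
have inv k : (cs k < p ^ k)%N /\ frequent_residue xs k (cs k).
  elim: k => [|k [IH1 IH2]]; first by split => // M; exists M; rewrite ?expn0 ?modn1.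
  have [t ht hI] := frequent_residue_lift IH2.
  have [h1 h2] : (tsel k (cs k) < p)%N /\ frequent_residue xs k.+1 (cs k + tsel k (cs k) * p ^ k).
    by apply: (epsilon_spec (inhabits 0%N)
      (fun t => (t < p)%N /\ frequent_residue xs k.+1 (cs k + t * p ^ k))); exists t.
  by split => //=; rewrite expnS; have := expn_gt0 p k; nia.
exists cs => k; have [lt_k fr_k] := inv k; split => // j.
elim: k {lt_k fr_k} => [|k IH]; first by rewrite leqn0 => /eqP ->; rewrite expn0 !modn1.
rewrite leq_eqVlt ltnS => /orP[/eqP -> | hj]; first by rewrite modn_small; case: (inv k.+1).
rewrite -(IH hj) -(modn_dvdm (cs k.+1) (dvdn_exp2l p hj)) /=.
by rewrite addnC modnMDl modn_dvdm // dvdn_exp2l.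
Qed.

Lemma nat_seq_cluster xs : exists2 y, Zp_elem v y &
  forall j M, exists2 m, (M <= m)%N & v ((xs m)%:R - y) <= r^-1 ^+ j.
Proof.
have [cs hcs] := frequent_residue_chain xs.
pose u k : K := (cs k)%:R.
have ucv j k : (j <= k)%N -> v (u k - u j) <= r^-1 ^+ j.
  have [lt_j _ _] := hcs j; have [_ _ mod_k] := hcs k.
  by move=> hjk; apply: v_natB_mod; rewrite mod_k // modn_small.
have [y cvg_y] : exists y, cvgK u y.
  exists (limK u); apply: cvgK_limK => e e0; have [j hj] := rinvX_small e0.
  exists j => m n hm hn; have -> : u m - u n = (u m - u j) - (u n - u j) by ring.
  by apply: vB_lt; apply: le_lt_trans hj; exact: ucv.
have hy j : v (y - u j) <= r^-1 ^+ j.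
  by apply: (cvgK_dist_le cvg_y); exists j => k hk; exact: ucv.
exists y.
  rewrite /Zp_elem -[y]subr0; apply: (cvgK_dist_le cvg_y).
  by exists 0%N => k _; rewrite subr0 v_nat_le1.
move=> j M; have [_ fr_j _] := hcs j; have [m hm hmod] := fr_j M.
exists m => //; have -> : (xs m)%:R - y = ((xs m)%:R - u j) - (y - u j) by ring.
by apply: vB_le => //; apply: v_natB_mod; rewrite hmod modn_small //; case: (hcs j).
Qed.

Lemma CZpZp_unif_cont f : CZpZp v f -> forall d, 0 < d ->
  exists m, forall x : nat, v (f (x + p ^ m)%N%:R - f x%:R) <= d.
Proof.
move=> [_ f_cont] d d0; apply: NNPP => hn.
have hx m : exists x, d < v (f (x + p ^ m)%N%:R - f x%:R).
  apply: NNPP => h; apply: hn; exists m => x; rewrite leNgt; apply/negP => hd.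
  by apply: h; exists x.
pose xs m := xchoose (hx m).
have [y yZ hy] := nat_seq_cluster xs.
have [de [de0 Hde]] := f_cont y yZ d d0.
have [j hj] := rinvX_small de0.
have [m hm hxy] := hy j j.
have hxy' : v ((xs m + p ^ m)%N%:R - y) < de.
  rewrite natrD addrAC; apply: vD_lt; first exact: le_lt_trans hxy hj.
  by apply: le_lt_trans hj; apply: v_nat_dvd; exact: dvdn_exp2l.
have := xchooseP (hx m); rewrite -/(xs m) ltNge => /negP; apply; apply: ltW.
have -> : f (xs m + p ^ m)%N%:R - f (xs m)%:R =
    (f (xs m + p ^ m)%N%:R - f y) - (f (xs m)%:R - f y) by ring.
apply: vB_lt; apply: Hde; rewrite /Zp_elem ?v_nat_le1 //; exact: le_lt_trans hxy hj.
Qed.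

Definition mahler_coef (f : K -> K) n : K := fdiffn n (fun m => f m%:R) 0%N.

Lemma mahler_coef_vanish f : CZpZp v f ->
  forall e, 0 < e -> exists N, forall n, (N <= n)%N -> v (mahler_coef f n) <= e.
Proof.
move=> hf; apply: fdiffn0_vanish; last exact: CZpZp_unif_cont.
by move=> x; apply: hf.1; exact: v_nat_le1.
Qed.

Lemma mahler_coef_le f c : (forall x, Zp_elem v x -> v (f x) <= c) ->
  forall n, v (mahler_coef f n) <= c.
Proof. by move=> hf n; apply: fdiffn_le => x; apply: hf; exact: v_nat_le1. Qed.

Lemma mahler_coef_Zp f : CZpZp v f -> forall n, Zp_elem v (mahler_coef f n).
Proof. by move=> hf; apply: mahler_coef_le; exact: hf.1. Qed.

Lemma mahler_coef_ext f g : (forall x, Zp_elem v x -> f x = g x) ->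
  mahler_coef f = mahler_coef g.
Proof.
move=> hfg; apply: functional_extensionality => n; rewrite /mahler_coef.
by congr fdiffn; apply: functional_extensionality => m; apply: hfg; exact: v_nat_le1.
Qed.

Lemma mahler_coefD f g n :
  mahler_coef (fun x => f x + g x) n = mahler_coef f n + mahler_coef g n.
Proof. by rewrite /mahler_coef (fdiffn_add n (fun m => f m%:R)). Qed.

Lemma mahler_coefMl a f n : mahler_coef (fun x => a * f x) n = a * mahler_coef f n.
Proof. by rewrite /mahler_coef (fdiffn_mull a n (fun m => f m%:R)). Qed.

Lemma mahler_coef_cst1 n : mahler_coef (fun _ => 1) n = (n == 0%N)%:R.
Proof. by case: n => // n; rewrite /mahler_coef fdiffn_const. Qed.

Lemma mahler_coef_id n : mahler_coef (fun x => x) n = (n == 1%N)%:R.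
Proof.
have D1 : fdiffn 1 (fun m : nat => m%:R : K) = (fun _ => 1).
  by apply: functional_extensionality => x; rewrite /fdiffn /= /fdiff -natrB // subSnn.
case: n => [|[|n]] //; rewrite /mahler_coef; first by rewrite D1.
by rewrite -[n.+2]addn1 fdiffnD D1 fdiffn_const addn1.
Qed.

Lemma CZpZp_mul f g : CZpZp v f -> CZpZp v g -> CZpZp v (fun y => f y * g y).
Proof.
move=> [fZ f_cont] [gZ g_cont]; split=> [x hx|x hx e e0]; first exact: vM_le1 (fZ x hx) (gZ x hx).
have [d1 [d10 H1]] := f_cont x hx e e0; have [d2 [d20 H2]] := g_cont x hx e e0.
exists (Num.min d1 d2); split=> [|y hy]; first by rewrite lt_min d10 d20.
rewrite lt_min => /andP[h1 h2].
have -> : f y * g y - f x * g x = g y * (f y - f x) + f x * (g y - g x) by ring.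
apply: vD_lt.
  exact: le_lt_trans (vM_le1 (gZ y hy) (lexx _)) (H1 y hy h1).
exact: le_lt_trans (vM_le1 (fZ x hx) (lexx _)) (H2 y hy h2).
Qed.

Definition binom_comb N (s : nat -> K) m : K := \sum_(0 <= k < N) s k * 'C(m, k)%:R.
Definition supported N (s : nat -> K) := forall k, (N <= k)%N -> s k = 0.
Definition Zp_seq (s : nat -> K) := forall k, Zp_elem v (s k).

Lemma sum_supported N N' s (F : nat -> K) : supported N s -> (N <= N')%N ->
  \sum_(0 <= k < N') s k * F k = \sum_(0 <= k < N) s k * F k.
Proof.
move=> hs hN; rewrite (big_cat_nat (leq0n N) hN) /= [X in _ + X]big_nat_cond.
by rewrite [X in _ + X]big1 ?addr0 // => k /andP[/andP[hk _] _]; rewrite hs ?mul0r.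
Qed.

Lemma binom_comb_supported N N' s m : supported N s -> (N <= N')%N ->
  binom_comb N' s m = binom_comb N s m.
Proof. exact: sum_supported. Qed.

Lemma binom_comb_le1 N s m : Zp_seq s -> v (binom_comb N s m) <= 1.
Proof. by move=> hs; apply: v_sum_le => // k _; apply: vM_le1 (hs k) (v_nat_le1 _). Qed.

(* The matrix ['C(m, k)] (m, k < N) is unitriangular with integral entries. *)
Lemma binom_comb_coef_le N s e : 0 <= e ->
  (forall m, (m < N)%N -> v (binom_comb N s m) <= e) -> forall k, (k < N)%N -> v (s k) <= e.
Proof.
move=> e0 hv; elim/ltn_ind => k IH hk.
have ek : binom_comb N s k = \sum_(0 <= n < k) s n * 'C(k, n)%:R + s k.
  rewrite /binom_comb (big_cat_nat (leq0n k) (ltnW hk)) /= (big_ltn hk) binn mulr1.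
  rewrite [X in _ + (_ + X)]big_nat_cond [X in _ + (_ + X)]big1 ?addr0 //.
  by move=> n /andP[/andP[hn _] _]; rewrite bin_small ?mulr0.
have -> : s k = binom_comb N s k - \sum_(0 <= n < k) s n * 'C(k, n)%:R by rewrite ek addrC addKr.
apply: vB_le; first exact: hv.
rewrite big_seq_cond; apply: v_sum_le => // n /andP[]; rewrite mem_index_iota => /andP[_ hn] _.
by rewrite -[e]mulr1 vM_le ?v_nat_le1 // IH // (ltn_trans hn).
Qed.

Lemma binom_comb_mahler f N m : (m < N)%N -> binom_comb N (mahler_coef f) m = f m%:R.
Proof.
move=> hm; rewrite (newton_interpolation m (fun n => f n%:R)) /binom_comb.
rewrite (big_cat_nat (leq0n m.+1) hm) /= [X in _ + X]big_nat_cond [X in _ + X]big1 ?addr0.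
  by apply: eq_bigr => k _; rewrite mulr_natr.
by move=> k /andP[/andP[hk _] _]; rewrite bin_small ?mulr0.
Qed.

Lemma binom_comb_mahler_approx f N e m : 0 <= e ->
  (forall k, (N <= k)%N -> v (mahler_coef f k) <= e) ->
  v (binom_comb N (mahler_coef f) m - f m%:R) <= e.
Proof.
move=> e0 hs; rewrite -(@binom_comb_mahler f (maxn N m.+1) m) ?leq_maxr // vBC.
rewrite /binom_comb (big_cat_nat (leq0n N) (leq_maxl N m.+1)) /= addrC addrK big_seq_cond.
apply: v_sum_le => // k /andP[]; rewrite mem_index_iota => /andP[hk _] _.
by rewrite -[e]mulr1 vM_le ?v_nat_le1 ?hs.
Qed.

Definition trunc N (s : nat -> K) k : K := if (k < N)%N then s k else 0.

Lemma trunc_supported N s : supported N (trunc N s).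
Proof. by move=> k hk; rewrite /trunc ltnNge hk. Qed.

Lemma trunc_Zp N s : Zp_seq s -> Zp_seq (trunc N s).
Proof. by move=> hs k; rewrite /trunc; case: ifP; rewrite // /Zp_elem v0 ler01. Qed.

Lemma sum_trunc N s (F : nat -> K) :
  \sum_(0 <= k < N) trunc N s k * F k = \sum_(0 <= k < N) s k * F k.
Proof.
rewrite big_seq_cond [RHS]big_seq_cond; apply: eq_bigr => k.
by rewrite mem_index_iota /trunc => /andP[/andP[_ ->]].
Qed.

Definition binom_shift i (u : nat -> K) k : K :=
  ((k%:R - i%:R) * u k + k%:R * u k.-1) / i.+1%:R.

Lemma binom_shift_supported i L u : supported L u -> supported L.+1 (binom_shift i u).
Proof.
move=> hu [|k] // hk; rewrite /binom_shift !hu ?mulr0 ?add0r ?mul0r //.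
exact: ltnW.
Qed.

Lemma mulr_binom_shift i u k (c : K) : i.+1%:R * (binom_shift i u k * c) =
  ((k%:R - i%:R) * u k + k%:R * u k.-1) * c.
Proof. by rewrite /binom_shift mulrA [i.+1%:R * _]mulrC divfK ?natr_neq0. Qed.

Lemma binom_comb_shift i L u m : supported L u ->
  i.+1%:R * binom_comb L.+1 (binom_shift i u) m = (m%:R - i%:R) * binom_comb L u m.
Proof.
move=> hu; rewrite /binom_comb mulr_sumr.
under eq_bigr => k _ do rewrite mulr_binom_shift.
rewrite sum_pred_shift ?hu // mulr_sumr; apply: eq_bigr => k _.
by rewrite natr_mul_bin_left; ring.
Qed.

Lemma binom_comb_mahler_mul f g N M e m : CZpZp v f -> CZpZp v g -> 0 <= e -> (N <= M)%N ->
  (forall k, (N <= k)%N -> v (mahler_coef f k) <= e) ->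
  (forall k, (N <= k)%N -> v (mahler_coef g k) <= e) ->
  (forall k, (N <= k)%N -> v (mahler_coef (fun y => f y * g y) k) <= e) ->
  v (binom_comb N (mahler_coef f) m * binom_comb N (mahler_coef g) m -
     binom_comb M (mahler_coef (fun y => f y * g y)) m) <= e.
Proof.
move=> hf hg e0 hNM hNf hNg hNfg.
have af := binom_comb_mahler_approx m e0 hNf; have ag := binom_comb_mahler_approx m e0 hNg.
have afg := binom_comb_mahler_approx m e0 (fun k hk => hNfg k (leq_trans hNM hk)).
have cf := binom_comb_le1 N m (mahler_coef_Zp hf).
have cg : v (g m%:R) <= 1 by apply: hg.1; exact: v_nat_le1.
set F := binom_comb N _ m in af cf *; set G := binom_comb N _ m in ag *.
set H := binom_comb M _ m in afg *.
have -> : F * G - H = F * (G - g m%:R) + (F - f m%:R) * g m%:R - (H - f m%:R * g m%:R) by ring.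
apply: vB_le => //; apply: vD_le; first exact: vM_le1.
by rewrite mulrC; exact: vM_le1.
Qed.

Section Operators.
Variable X : countType.
Local Notation QX := (@inQpX R K v X).
Implicit Types (xi eta : X -> K) (T : Op K X).

Lemma inQpX_le1 xi : (forall i, v (xi i) <= 1) -> QX xi.
Proof. by move=> h; exists [::] => i; rewrite ltNge h. Qed.

Lemma inQpX0 : QX (fun _ => 0).
Proof. by apply: inQpX_le1 => i; rewrite v0 ler01. Qed.

Lemma inQpXD xi eta : QX xi -> QX eta -> QX (fun i => xi i + eta i).
Proof.
move=> [s1 h1] [s2 h2]; exists (s1 ++ s2) => i; rewrite mem_cat.
case: (ltP 1 (v (xi i))) => [/h1 -> //|a].
case: (ltP 1 (v (eta i))) => [/h2 ->|b]; first by rewrite orbT.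
by rewrite ltNge vD_le.
Qed.

Lemma inQpXZ a xi : Zp_elem v a -> QX xi -> QX (fun i => a * xi i).
Proof.
move=> ha [s h]; exists s => i hi; apply: h; rewrite ltNge; apply: contra_ltN hi => hx.
exact: vM_le1.
Qed.

Lemma inQpXB xi eta : QX xi -> QX eta -> QX (fun i => xi i - eta i).
Proof.
move=> hx he; apply: inQpXD hx _.
have -> : (fun i => - eta i) = (fun i => -1 * eta i).
  by apply: functional_extensionality => i; rewrite mulN1r.
by apply: inQpXZ he; rewrite /Zp_elem vN1.
Qed.

Lemma inQpX_sum N (F : nat -> X -> K) :
  (forall k, QX (F k)) -> QX (fun i => \sum_(0 <= k < N) F k i).
Proof.
move=> h; elim: N => [|N IH].
  have -> : (fun i => \sum_(0 <= k < 0) F k i) = (fun _ => 0).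
    by apply: functional_extensionality => i; rewrite big_geq.
  exact: inQpX0.
have -> : (fun i => \sum_(0 <= k < N.+1) F k i) = (fun i => \sum_(0 <= k < N) F k i + F N i).
  by apply: functional_extensionality => i; rewrite big_nat_recr.
exact: inQpXD.
Qed.

Lemma inQpX_bounded xi : QX xi ->
  exists b, [/\ b != 0, 1 <= v b & forall i, v (xi i) <= v b].
Proof.
move=> [s hs]; pose G i := if 1 < v (xi i) then xi i else 1.
have hG i : 1 <= v (G i) by rewrite /G; case: ifP => [/ltW //|]; rewrite v1.
have prod_ge1 (t : seq X) : 1 <= v (\prod_(i <- t) G i).
  apply: (big_ind (fun x => 1 <= v x)); rewrite ?v1 // => x y hx hy.
  by rewrite vM; nra.
exists (\prod_(i <- s) G i); split=> // [|i].
  by apply/eqP => e; move: (prod_ge1 s); rewrite e v0 ler10.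
case: (ltP 1 (v (xi i))) => hi; last exact: le_trans hi (prod_ge1 s).
rewrite (big_rem i (hs i hi)) vM /G hi.
by have := prod_ge1 (rem i s); have := v_ge0 (xi i); nra.
Qed.

Lemma inEP_inQpX P eta : inEP v P eta -> QX eta.
Proof. by move=> h; exists P => i; apply: contraTT; rewrite -leNgt; exact: h. Qed.

Lemma inQpX_inEP xi : QX xi -> exists P, inEP v P xi.
Proof. by move=> [s hs]; exists s => j; apply: contraR; rewrite -ltNge; exact: hs. Qed.

Lemma inQpX_common_support N (F : nat -> X -> K) :
  (forall k, QX (F k)) -> exists Q, forall k, (k < N)%N -> inEP v Q (F k).
Proof.
move=> hF; elim: N => [|N [Q hQ]]; first by exists [::].
have [s hs] := inQpX_inEP (hF N); exists (Q ++ s) => k.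
rewrite ltnS leq_eqVlt => /orP[/eqP -> | hk] j; rewrite mem_cat negb_or => /andP[hjQ hjs].
  exact: hs.
exact: hQ.
Qed.

Section BoundedOperator.
Variable T : Op K X.
Hypothesis HT : isBop v T.

Lemma isBop_inQpX xi : QX xi -> QX (T xi). Proof. by case: HT => h _ _ _; exact: h. Qed.

Lemma isBopD xi eta : QX xi -> QX eta ->
  T (fun i => xi i + eta i) = (fun i => T xi i + T eta i).
Proof. by case: HT => _ h _ _; exact: h. Qed.

Lemma isBopZ a xi : Zp_elem v a -> QX xi -> T (fun i => a * xi i) = (fun i => a * T xi i).
Proof. by case: HT => _ _ h _; exact: h. Qed.

Lemma isBop0 : T (fun _ => 0) = (fun _ => 0).
Proof.
have := isBopZ (v_nat_le1 0) inQpX0.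
have -> : (fun i : X => 0%:R * 0) = (fun _ => 0 : K).
  by apply: functional_extensionality => i; rewrite mul0r.
by move=> ->; apply: functional_extensionality => i; rewrite mul0r.
Qed.

Lemma isBop_sum N (s : nat -> K) (F : nat -> X -> K) :
  (forall k, Zp_elem v (s k)) -> (forall k, QX (F k)) ->
  T (fun i => \sum_(0 <= k < N) s k * F k i) = (fun i => \sum_(0 <= k < N) s k * T (F k) i).
Proof.
move=> hs hF; elim: N => [|N IH].
  have -> : (fun i => \sum_(0 <= k < 0) s k * F k i) = (fun _ => 0).
    by apply: functional_extensionality => i; rewrite big_geq.
  by rewrite isBop0; apply: functional_extensionality => i; rewrite big_geq.
have -> : (fun i => \sum_(0 <= k < N.+1) s k * F k i) =
    (fun i => \sum_(0 <= k < N) s k * F k i + s N * F N i).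
  by apply: functional_extensionality => i; rewrite big_nat_recr.
rewrite isBopD ?IH ?isBopZ //; first by apply: functional_extensionality => i; rewrite big_nat_recr.
- by apply: inQpX_sum => k; exact: inQpXZ.
- exact: inQpXZ.
Qed.

Lemma opnorm_le_scale c b xi : opnorm_le v T c -> b != 0 -> QX xi ->
  (forall i, v (xi i) <= v b) -> forall i, v (T xi i) <= c * v b.
Proof.
move=> hn b0 hx hb i; have vb0 := v_gt0 b0.
pose eta i := b^-1 * xi i.
have he j : v (eta j) <= 1.
  by rewrite vM vV // mulrC ler_pdivrMr // mul1r.
have qe := inQpX_le1 he.
have -> : T xi i = b * T eta i.
  have [hb1|hb1] := leP (v b) 1.
    have -> : xi = (fun i => b * eta i).
      by apply: functional_extensionality => j; rewrite /eta mulrA mulfV // mul1r.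
    by rewrite isBopZ.
  have hbi : Zp_elem v b^-1 by rewrite /Zp_elem vV // invf_le1 // ltW.
  by rewrite /eta isBopZ // mulrA mulfV // mul1r.
by rewrite vM mulrC ler_wpM2r ?v_ge0 ?hn.
Qed.

End BoundedOperator.

Definition close (F : seq X) (e : R) eta xi := forall i, i \in F -> v (eta i - xi i) < e.

Definition near_EP (P : seq X) xi (Phi : (X -> K) -> Prop) :=
  exists (F : seq X) (e : R), 0 < e /\ forall eta, inEP v P eta -> close F e eta xi -> Phi eta.

Lemma near_EP_impl P xi (Phi Psi : (X -> K) -> Prop) :
  (forall eta, inEP v P eta -> Phi eta -> Psi eta) -> near_EP P xi Phi -> near_EP P xi Psi.
Proof. by move=> h [F [e [e0 H]]]; exists F, e; split=> // eta hP hF; apply/h/H. Qed.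

Lemma close_cat_min F1 F2 e1 e2 eta xi : close (F1 ++ F2) (Num.min e1 e2) eta xi ->
  close F1 e1 eta xi /\ close F2 e2 eta xi.
Proof.
move=> h; split=> i hi; have := h i;
  by rewrite mem_cat hi ?orbT lt_min => /(_ isT) /andP[].
Qed.

Lemma near_EP_and P xi (Phi Psi : (X -> K) -> Prop) :
  near_EP P xi Phi -> near_EP P xi Psi -> near_EP P xi (fun eta => Phi eta /\ Psi eta).
Proof.
move=> [F1 [e1 [e10 H1]]] [F2 [e2 [e20 H2]]]; exists (F1 ++ F2), (Num.min e1 e2).
split=> [|eta hP /close_cat_min[hF1 hF2]]; first by rewrite lt_min e10 e20.
by split; [exact: H1 | exact: H2].
Qed.

Lemma near_EP_all P xi N (Phi : nat -> (X -> K) -> Prop) :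
  (forall k, (k < N)%N -> near_EP P xi (Phi k)) ->
  near_EP P xi (fun eta => forall k, (k < N)%N -> Phi k eta).
Proof.
elim: N => [|N IH] h; first by exists [::], 1; split.
apply: near_EP_impl (near_EP_and (IH (fun k hk => h k (ltnW hk))) (h N (ltnSn N))).
by move=> eta _ [H1 H2] k; rewrite ltnS leq_eqVlt => /orP[/eqP -> | /H1].
Qed.

Lemma near_EP_bounded P xi b : inEP v P xi -> 1 <= v b ->
  (forall i, v (xi i) <= v b) -> near_EP P xi (fun eta => forall i, v (eta i) <= v b).
Proof.
move=> hP b1 hb; exists P, 1; split=> // eta hPe hF i.
case hi: (i \in P); last by apply: le_trans b1; apply: hPe; rewrite hi.
by rewrite -(subrK (xi i) (eta i)); apply: vD_le => //; apply: le_trans b1; exact/ltW/hF.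
Qed.

Lemma tau_open_box (Q G : seq X) c z0 : 0 < c ->
  tau_open v (fun z => [/\ QX z, inEP v Q z & close G c z z0]).
Proof.
move=> c0; split=> [z []//|P z [[hz hQ hG] hP]].
exists (P ++ G), (Num.min 1 c); split=> [|eta hPe /close_cat_min[hP1 hGc]].
  by rewrite lt_min ltr01 c0.
split=> //; split=> [||i hi]; first exact: inEP_inQpX hPe.
  move=> j hjQ; case hj: (j \in P); last by apply: hPe; rewrite hj.
  by rewrite -(subrK (z j) (eta j)); apply: vD_le; [exact/ltW/hP1 | exact: hQ].
have -> : eta i - z0 i = (eta i - z i) + (z i - z0 i) by rewrite addrA subrK.
by apply: vD_lt; [exact: hGc | exact: hG].
Qed.

Lemma isBop_near T P Q G c xi : isBop v T -> 0 < c -> QX xi -> inEP v P xi ->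
  inEP v Q (T xi) -> near_EP P xi (fun eta => inEP v Q (T eta) /\ close G c (T eta) (T xi)).
Proof.
move=> HT c0 hx hP hQ; have [_ _ _ T_cont] := HT.
have [_ /(_ P xi)] := T_cont _ (tau_open_box Q G (T xi) c0).
case; first by split=> //; split=> //; split=> [||i _]; [exact: isBop_inQpX | | rewrite subrr v0].
by move=> F [e [e0 H]]; exists F, e; split=> // eta hPe /(H _ hPe) [[_ []]].
Qed.

Lemma isBop_near_support T P Q xi : isBop v T -> QX xi -> inEP v P xi ->
  inEP v Q (T xi) -> near_EP P xi (fun eta => inEP v Q (T eta)).
Proof.
move=> HT hx hP hQ; apply: near_EP_impl (isBop_near [::] HT ltr01 hx hP hQ).
by move=> eta _ [].
Qed.

Lemma isBop_near_close T P G c xi : isBop v T -> 0 < c -> QX xi -> inEP v P xi ->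
  near_EP P xi (fun eta => close G c (T eta) (T xi)).
Proof.
move=> HT c0 hx hP; have [Q hQ] := inQpX_inEP (isBop_inQpX HT hx).
by apply: near_EP_impl (isBop_near G HT c0 hx hP hQ) => eta _ [].
Qed.

Lemma tau_open_preimage T U :
  (forall P xi, QX xi -> inEP v P xi ->
     exists2 Q, inEP v Q (T xi) & near_EP P xi (fun eta => inEP v Q (T eta))) ->
  (forall P xi G c, QX xi -> inEP v P xi -> 0 < c ->
     near_EP P xi (fun eta => close G c (T eta) (T xi))) ->
  tau_open v U -> tau_open v (fun xi => QX xi /\ U (T xi)).
Proof.
move=> T_supp T_close [_ U_open]; split=> [xi []//|P xi [[hx hU] hP]].
have [Q hQ near_Q] := T_supp P xi hx hP.
have [F [e [e0 HU]]] := U_open Q (T xi) (conj hU hQ).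
have [F' [e' [e'0 H]]] := near_EP_and near_Q (T_close P xi F e hx hP e0).
exists F', e'; split=> // eta hPe /(H _ hPe) [hQe hFe].
by split=> //; split; [exact: inEP_inQpX hPe | exact: (HU _ hQe hFe).1].
Qed.

Section BinomialOperators.
Variables (A : Op K X) (B : nat -> Op K X).
Hypothesis HA : isBop v A.
Hypothesis HB : forall n, [/\ isBop v (B n),
  eqOp v (fun xi i => n`!%:R * B n xi i) (falling A n) & opnorm_le v (B n) 1].

Lemma B_isBop n : isBop v (B n). Proof. by case: (HB n). Qed.

Lemma B_inQpX n xi : QX xi -> QX (B n xi). Proof. exact/isBop_inQpX/B_isBop. Qed.

Lemma B_le n b xi : b != 0 -> QX xi -> (forall i, v (xi i) <= v b) ->
  forall i, v (B n xi i) <= v b.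
Proof.
have [_ _ hn] := HB n; move=> b0 hx hb i.
by have := opnorm_le_scale (B_isBop n) hn b0 hx hb i; rewrite mul1r.
Qed.

Lemma B_falling n xi : QX xi -> (fun i => n`!%:R * B n xi i) = falling A n xi.
Proof. by have [_ h _] := HB n; exact: h. Qed.

Lemma B0 xi : QX xi -> B 0 xi = xi.
Proof.
move=> /(B_falling 0) e; apply: functional_extensionality => i.
by have := congr1 (fun g => g i) e; rewrite /= mul1r.
Qed.

Lemma B1 xi : QX xi -> B 1 xi = A xi.
Proof.
move=> /(B_falling 1) e; apply: functional_extensionality => i.
by have := congr1 (fun g => g i) e; rewrite /= mul1r mul0r subr0.
Qed.

Lemma A_B k xi : QX xi -> forall i,
  A (B k xi) i = k%:R * B k xi i + k.+1%:R * B k.+1 xi i.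
Proof.
move=> hx i; have kf : k`!%:R != 0 :> K by apply: natr_neq0; exact: fact_gt0.
have := congr1 (fun g => g i) (B_falling k.+1 hx); rewrite /= -(B_falling k hx).
rewrite isBopZ //; [|exact: v_nat_le1 | exact: B_inQpX].
rewrite factS natrM => e; apply: (mulfI kf).
by rewrite mulrDr [_ * (k.+1%:R * _)]mulrA [_ * k.+1%:R]mulrC e; ring.
Qed.

Definition Bcomb N (s : nat -> K) xi : X -> K := fun i => \sum_(0 <= k < N) s k * B k xi i.

Lemma Bcomb_supported N N' s xi : supported N s -> (N <= N')%N ->
  Bcomb N' s xi = Bcomb N s xi.
Proof.
by move=> hs hN; apply: functional_extensionality => i; rewrite /Bcomb (sum_supported _ hs hN).
Qed.

Lemma Bcomb_inQpX N s xi : Zp_seq s -> QX xi -> QX (Bcomb N s xi).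
Proof.
move=> hs hx; apply: (@inQpX_sum N (fun k i => s k * B k xi i)) => k.
exact/inQpXZ/B_inQpX.
Qed.

Lemma Bcomb_le N s e b xi : 0 <= e -> (forall k, (k < N)%N -> v (s k) <= e) ->
  b != 0 -> QX xi -> (forall i, v (xi i) <= v b) -> forall i, v (Bcomb N s xi i) <= e * v b.
Proof.
move=> e0 hs b0 hx hb i; rewrite /Bcomb big_seq_cond.
apply: v_sum_le => [|k /andP[]]; first by rewrite mulr_ge0 ?v_ge0.
by rewrite mem_index_iota => /andP[_ hk] _; rewrite vM_le ?hs ?B_le.
Qed.

Lemma BcombD N s xi eta : QX xi -> QX eta ->
  Bcomb N s (fun i => xi i + eta i) = (fun i => Bcomb N s xi i + Bcomb N s eta i).
Proof.
move=> hx he; apply: functional_extensionality => i; rewrite /Bcomb -big_split /=.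
by apply: eq_bigr => k _; rewrite (isBopD (B_isBop k) hx he) mulrDr.
Qed.

Lemma BcombZ N s a xi : Zp_elem v a -> QX xi ->
  Bcomb N s (fun i => a * xi i) = (fun i => a * Bcomb N s xi i).
Proof.
move=> ha hx; apply: functional_extensionality => i; rewrite /Bcomb mulr_sumr.
by apply: eq_bigr => k _; rewrite (isBopZ (B_isBop k) ha hx) mulrCA.
Qed.

Lemma Bcomb_tail N M s e b xi x : 0 <= e -> (forall k, (N <= k)%N -> v (s k) <= e) ->
  b != 0 -> QX xi -> (forall i, v (xi i) <= v b) -> (N <= M)%N ->
  v (Bcomb M s xi x - Bcomb N s xi x) <= e * v b.
Proof.
move=> e0 hs b0 hx hb hNM; rewrite /Bcomb (big_cat_nat (leq0n N) hNM) /= addrC addrK.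
rewrite big_seq_cond; apply: v_sum_le => [|k /andP[]]; first by rewrite mulr_ge0 ?v_ge0.
by rewrite mem_index_iota => /andP[hk _] _; rewrite vM_le ?hs ?B_le.
Qed.

Lemma Bcomb_close N s t e b xi x : 0 <= e ->
  (forall m, (m < N)%N -> v (binom_comb N s m - binom_comb N t m) <= e) ->
  b != 0 -> QX xi -> (forall i, v (xi i) <= v b) ->
  v (Bcomb N s xi x - Bcomb N t xi x) <= e * v b.
Proof.
move=> e0 hst b0 hx hb; pose d k := s k - t k.
have -> : Bcomb N s xi x - Bcomb N t xi x = Bcomb N d xi x.
  by rewrite /Bcomb -sumrB; apply: eq_bigr => k _; rewrite mulrBl.
apply: Bcomb_le => //; apply: binom_comb_coef_le => // m /hst.
by rewrite /binom_comb -sumrB (eq_bigr (fun k => d k * 'C(m, k)%:R)) // => k _; rewrite mulrBl.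
Qed.

Lemma A_Bcomb i L u eta : supported L u -> Zp_seq u -> QX eta -> forall x,
  A (Bcomb L u eta) x - i%:R * Bcomb L u eta x = i.+1%:R * Bcomb L.+1 (binom_shift i u) eta x.
Proof.
move=> hs hu he x.
have -> : A (Bcomb L u eta) = (fun x => \sum_(0 <= k < L) u k * A (B k eta) x).
  exact: (isBop_sum HA L hu (fun k => B_inQpX k he)).
rewrite /Bcomb [in RHS]mulr_sumr; under [RHS]eq_bigr => k _ do rewrite mulr_binom_shift.
rewrite sum_pred_shift ?hs // mulr_sumr -sumrB; apply: eq_bigr => k _.
by rewrite A_B //; ring.
Qed.

Lemma B_Bcomb i : forall N t, supported N t -> Zp_seq t -> exists L u,
  [/\ supported L u, Zp_seq u,
      forall m, binom_comb L u m = 'C(m, i)%:R * binom_comb N t m &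
      forall eta, QX eta -> B i (Bcomb N t eta) = Bcomb L u eta].
Proof.
elim: i => [|i IH] N t hs ht.
  exists N, t; split=> // [m|eta he]; first by rewrite bin0 mul1r.
  by rewrite B0 //; exact: Bcomb_inQpX.
have [L [u [hsu hzu hvu hBu]]] := IH N t hs ht.
have i1 : i.+1%:R != 0 :> K by apply: natr_neq0.
have hvu' m : binom_comb L.+1 (binom_shift i u) m = 'C(m, i.+1)%:R * binom_comb N t m.
  apply: (mulfI i1); rewrite binom_comb_shift // hvu mulrA [in RHS]mulrA.
  by rewrite natr_mul_bin_left.
have hzu' : Zp_seq (binom_shift i u).
  move=> k; have [hk|hk] := ltnP k L.+1; last first.
    by rewrite /Zp_elem (binom_shift_supported i hsu) // v0 ler01.
  apply: (@binom_comb_coef_le L.+1) => // m _; rewrite hvu'.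
  exact: vM_le1 (v_nat_le1 _) (binom_comb_le1 _ _ ht).
exists L.+1, (binom_shift i u); split=> // [|eta he]; first exact: binom_shift_supported.
have hz := Bcomb_inQpX N ht he.
apply: functional_extensionality => x; apply: (mulfI i1).
by rewrite -A_Bcomb // -(hBu eta he) (A_B i hz x); ring.
Qed.

Lemma Bcomb_comp N : forall s M t, supported M t -> Zp_seq t -> exists L w,
  [/\ supported L w,
      forall m, binom_comb L w m = binom_comb N s m * binom_comb M t m &
      forall eta, QX eta -> Bcomb N s (Bcomb M t eta) = Bcomb L w eta].
Proof.
elim: N => [|N IH] s M t hs ht.
  exists 0%N, (fun _ => 0); split=> // [m|eta he].
    by rewrite /binom_comb !(big_geq (leqnn 0)) mul0r.
  by apply: functional_extensionality => x; rewrite /Bcomb !big_geq.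
have [L1 [w1 [hs1 hv1 hO1]]] := IH s M t hs ht.
have [L2 [u [hs2 _ hv2 hO2]]] := B_Bcomb N hs ht.
pose w k := w1 k + s N * u k; exists (maxn L1 L2), w; split.
- by move=> k; rewrite geq_max => /andP[h1 h2]; rewrite /w hs1 // hs2 // mulr0 addr0.
- move=> m; have -> : binom_comb (maxn L1 L2) w m =
      binom_comb (maxn L1 L2) w1 m + s N * binom_comb (maxn L1 L2) u m.
    by rewrite /binom_comb mulr_sumr -big_split; apply: eq_bigr => k _ /=; rewrite /w; ring.
  rewrite (binom_comb_supported _ hs1 (leq_maxl _ _)) (binom_comb_supported _ hs2 (leq_maxr _ _)).
  by rewrite hv1 hv2 /binom_comb big_nat_recr //=; ring.
- move=> eta he; apply: functional_extensionality => x.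
  have -> : Bcomb (maxn L1 L2) w eta x =
      Bcomb (maxn L1 L2) w1 eta x + s N * Bcomb (maxn L1 L2) u eta x.
    by rewrite /Bcomb mulr_sumr -big_split; apply: eq_bigr => k _ /=; rewrite /w; ring.
  rewrite (Bcomb_supported _ hs1 (leq_maxl _ _)) (Bcomb_supported _ hs2 (leq_maxr _ _)).
  by rewrite -hO1 // -hO2 // /Bcomb big_nat_recr.
Qed.

Definition fcalc (f : K -> K) : Op K X :=
  fun xi x => limK (fun N => Bcomb N (mahler_coef f) xi x).

Lemma fcalc_cvg f xi x : CZpZp v f -> QX xi ->
  cvgK (fun N => Bcomb N (mahler_coef f) xi x) (fcalc f xi x).
Proof.
move=> hf hx; apply: cvgK_limK => e e0.
have [b [b0 _ hb]] := inQpX_bounded hx; have vb0 := v_gt0 b0.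
have e1 : 0 < e / (2 * v b) by rewrite divr_gt0 // mulr_gt0.
have [N hN] := mahler_coef_vanish hf e1.
have tail m n : (N <= m)%N -> (m <= n)%N ->
    v (Bcomb n (mahler_coef f) xi x - Bcomb m (mahler_coef f) xi x) < e.
  move=> hm hmn; apply: le_lt_trans (Bcomb_tail x (ltW e1) _ b0 hx hb hmn) _.
    by move=> k hk; apply: hN (leq_trans hm hk).
  exact: half_divM_lt.
exists N => m n hm hn; have [hmn|/ltnW hnm] := leqP m n; first by rewrite vBC tail.
exact: tail.
Qed.

Lemma fcalc_approx f xi x N e b : CZpZp v f -> QX xi -> b != 0 ->
  (forall i, v (xi i) <= v b) -> 0 <= e -> (forall k, (N <= k)%N -> v (mahler_coef f k) <= e) ->
  v (fcalc f xi x - Bcomb N (mahler_coef f) xi x) <= e * v b.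
Proof.
move=> hf hx b0 hb e0 hN; apply: (cvgK_dist_le (fcalc_cvg x hf hx)).
by exists N => M hM; exact: Bcomb_tail.
Qed.

Lemma fcalc_le f xi x c b : CZpZp v f -> QX xi -> b != 0 -> (forall i, v (xi i) <= v b) ->
  0 <= c -> (forall k, v (mahler_coef f k) <= c) -> v (fcalc f xi x) <= c * v b.
Proof.
move=> hf hx b0 hb c0 hc; rewrite -[fcalc f xi x]subr0.
apply: (cvgK_dist_le (fcalc_cvg x hf hx)); exists 0%N => M _; rewrite subr0.
exact: Bcomb_le.
Qed.

Lemma fcalc_inEP f xi b N Q : CZpZp v f -> QX xi -> b != 0 -> (forall i, v (xi i) <= v b) ->
  (forall k, (N <= k)%N -> v (mahler_coef f k) <= (v b)^-1) ->
  inEP v Q (Bcomb N (mahler_coef f) xi) -> inEP v Q (fcalc f xi).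
Proof.
move=> hf hx b0 hb hN hQ j hj.
rewrite -(subrK (Bcomb N (mahler_coef f) xi j) (fcalc f xi j)); apply: vD_le; last exact: hQ.
have := fcalc_approx j hf hx b0 hb _ hN; rewrite mulVf ?gt_eqF ?v_gt0 //.
by apply; rewrite invr_ge0 v_ge0.
Qed.

Lemma fcalc_inQpX f xi : CZpZp v f -> QX xi -> QX (fcalc f xi).
Proof.
move=> hf hx; have [b [b0 _ hb]] := inQpX_bounded hx.
have vb0 : 0 < (v b)^-1 by rewrite invr_gt0 v_gt0.
have [N hN] := mahler_coef_vanish hf vb0.
have [Q hQ] := inQpX_inEP (Bcomb_inQpX N (mahler_coef_Zp hf) hx).
exact/inEP_inQpX/(fcalc_inEP hf hx b0 hb hN hQ).
Qed.

Lemma fcalc_addr f xi eta : CZpZp v f -> QX xi -> QX eta ->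
  fcalc f (fun i => xi i + eta i) = (fun i => fcalc f xi i + fcalc f eta i).
Proof.
move=> hf hx he; apply: functional_extensionality => x; apply: limKE.
apply: eq_cvgK (cvgKD (fcalc_cvg x hf hx) (fcalc_cvg x hf he)) => N.
by rewrite BcombD.
Qed.

Lemma fcalc_scaler f a xi : CZpZp v f -> Zp_elem v a -> QX xi ->
  fcalc f (fun i => a * xi i) = (fun i => a * fcalc f xi i).
Proof.
move=> hf ha hx; apply: functional_extensionality => x; apply: limKE.
apply: eq_cvgK (cvgKMl a (fcalc_cvg x hf hx)) => N.
by rewrite BcombZ.
Qed.

Lemma fcalcD f g : CZpZp v f -> CZpZp v g ->
  eqOp v (fcalc (fun y => f y + g y)) (fun xi i => fcalc f xi i + fcalc g xi i).
Proof.
move=> hf hg xi hx; apply: functional_extensionality => x; apply: limKE.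
apply: eq_cvgK (cvgKD (fcalc_cvg x hf hx) (fcalc_cvg x hg hx)) => N.
by rewrite /Bcomb -big_split; apply: eq_bigr => k _; rewrite mahler_coefD mulrDl.
Qed.

Lemma fcalcZ a f : CZpZp v f ->
  eqOp v (fcalc (fun y => a * f y)) (fun xi i => a * fcalc f xi i).
Proof.
move=> hf xi hx; apply: functional_extensionality => x; apply: limKE.
apply: eq_cvgK (cvgKMl a (fcalc_cvg x hf hx)) => N.
by rewrite /Bcomb mulr_sumr; apply: eq_bigr => k _; rewrite mahler_coefMl mulrA.
Qed.

Lemma fcalc_cst1 : eqOp v (fcalc (fun _ => 1)) (fun xi => xi).
Proof.
move=> xi hx; apply: functional_extensionality => x; apply: limK_eventually.
exists 1%N => [[|N]] // _; rewrite /Bcomb big_nat_recl //= mahler_coef_cst1 mul1r B0 //.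
by rewrite big_nat_cond big1 ?addr0 // => k _; rewrite mahler_coef_cst1 mul0r.
Qed.

Lemma fcalc_id : eqOp v (fcalc (fun y => y)) A.
Proof.
move=> xi hx; apply: functional_extensionality => x; apply: limK_eventually.
exists 2%N => [[|[|N]]] // _; rewrite /Bcomb !big_nat_recl //= !mahler_coef_id /=.
rewrite mul0r add0r mul1r B1 // big_nat_cond big1 ?addr0 // => k _.
by rewrite mahler_coef_id mul0r.
Qed.

Lemma fcalc_ext f g : (forall x, Zp_elem v x -> f x = g x) -> eqOp v (fcalc f) (fcalc g).
Proof. by move=> /mahler_coef_ext hfg xi _; rewrite /fcalc hfg. Qed.

Lemma fcalc_opnorm f c : CZpZp v f -> (forall x, Zp_elem v x -> v (f x) <= c) ->
  opnorm_le v (fcalc f) c.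
Proof.
move=> hf hc xi hx h1 i.
have c0 : 0 <= c by apply: le_trans (hc 0 _); rewrite ?v_ge0 // /Zp_elem v0 ler01.
have hb1 j : v (xi j) <= v (1 : K) by rewrite v1.
by have := fcalc_le i hf hx (oner_neq0 K) hb1 c0 (mahler_coef_le hc); rewrite v1 mulr1.
Qed.

Lemma Bcomb_mahler_mul f g N e b xi x : CZpZp v f -> CZpZp v g -> 0 <= e ->
  (forall k, (N <= k)%N -> v (mahler_coef f k) <= e) ->
  (forall k, (N <= k)%N -> v (mahler_coef g k) <= e) ->
  (forall k, (N <= k)%N -> v (mahler_coef (fun y => f y * g y) k) <= e) ->
  b != 0 -> QX xi -> (forall i, v (xi i) <= v b) ->
  v (Bcomb N (mahler_coef f) (Bcomb N (mahler_coef g) xi) x -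
     fcalc (fun y => f y * g y) xi x) <= e * v b.
Proof.
move=> hf hg e0 hNf hNg hNfg b0 hx hb.
have [L [w [hw hvw hcomp]]] :=
  @Bcomb_comp N (mahler_coef f) N _ (@trunc_supported N (mahler_coef g))
    (trunc_Zp N (mahler_coef_Zp hg)).
have -> : Bcomb N (mahler_coef g) xi = Bcomb N (trunc N (mahler_coef g)) xi.
  by apply: functional_extensionality => i; rewrite /Bcomb sum_trunc.
set M := maxn L N; rewrite hcomp // -(Bcomb_supported _ hw (leq_maxl L N)) -/M.
set fg := fun y => f y * g y.
have -> : Bcomb M w xi x - fcalc fg xi x =
    (Bcomb M w xi x - Bcomb M (mahler_coef fg) xi x) +
    (Bcomb M (mahler_coef fg) xi x - fcalc fg xi x) by rewrite addrA subrK.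
apply: vD_le.
  apply: Bcomb_close => // m _; rewrite (binom_comb_supported _ hw (leq_maxl L N)) hvw.
  rewrite /binom_comb sum_trunc -/(binom_comb _ _ _) -/(binom_comb _ _ _).
  exact: binom_comb_mahler_mul (leq_maxr L N) hNf hNg hNfg.
rewrite vBC; apply: fcalc_approx => // [|k hk]; first exact: CZpZp_mul.
exact: hNfg (leq_trans (leq_maxr L N) hk).
Qed.

Lemma fcalcM f g : CZpZp v f -> CZpZp v g ->
  eqOp v (fcalc (fun y => f y * g y)) (fun xi => fcalc f (fcalc g xi)).
Proof.
move=> hf hg xi hx; apply: functional_extensionality => x.
apply/esym/eqP; rewrite -subr_eq0; apply/eqP/eq0_v_small => eps eps0.
have [b [b0 _ hb]] := inQpX_bounded hx.
have [e [b' [e0 b'0 vb' heb]]] := exists_small_multiple b0 eps0.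
have [Nf hNf] := mahler_coef_vanish hf e0; have [Ng hNg] := mahler_coef_vanish hg e0.
have [Nfg hNfg] := mahler_coef_vanish (CZpZp_mul hf hg) e0.
set N := maxn Nf (maxn Ng Nfg).
have tail Nh h : (Nh <= N)%N -> (forall k, (Nh <= k)%N -> v (mahler_coef h k) <= e) ->
    forall k, (N <= k)%N -> v (mahler_coef h k) <= e.
  by move=> hN hh k hk; apply/hh/(leq_trans hN hk).
have hNf' := tail _ _ (leq_maxl _ _) hNf.
have hNg' := tail _ _ (leq_trans (leq_maxl _ _) (leq_maxr _ _)) hNg.
have hNfg' := tail _ _ (leq_trans (leq_maxr _ _) (leq_maxr _ _)) hNfg.
set zeta := fcalc g xi; set G := Bcomb N (mahler_coef g) xi.
have hz : QX zeta by exact: fcalc_inQpX.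
have hzb i : v (zeta i) <= v b.
  by have := fcalc_le i hg hx b0 hb ler01 (mahler_coef_Zp hg); rewrite mul1r.
have hG : QX G by exact: Bcomb_inQpX (mahler_coef_Zp hg) hx.
have hdel i : v (zeta i - G i) <= v b'.
  by rewrite vb'; move: (fcalc_approx i hg hx b0 hb (ltW e0) hNg').
have zeta_G : v (Bcomb N (mahler_coef f) zeta x - Bcomb N (mahler_coef f) G x) <= e * v b.
  have -> : zeta = (fun i => G i + (zeta i - G i)).
    by apply: functional_extensionality => i; rewrite addrC subrK.
  rewrite BcombD //; last exact: inQpXB.
  rewrite addrC addKr -vb' -[v b']mul1r.
  apply: Bcomb_le => // [k _|]; [exact: mahler_coef_Zp | exact: inQpXB].
have -> : fcalc f zeta x - fcalc (fun y => f y * g y) xi x =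
    (fcalc f zeta x - Bcomb N (mahler_coef f) zeta x) +
    (Bcomb N (mahler_coef f) zeta x - Bcomb N (mahler_coef f) G x) +
    (Bcomb N (mahler_coef f) G x - fcalc (fun y => f y * g y) xi x) by ring.
apply: le_lt_trans heb; apply: vD_le; first apply: vD_le => //.
  exact: fcalc_approx (ltW e0) hNf'.
exact: Bcomb_mahler_mul (ltW e0) hNf' hNg' hNfg' b0 hx hb.
Qed.

Lemma fcalc_near_support f P xi : CZpZp v f -> QX xi -> inEP v P xi ->
  exists2 Q, inEP v Q (fcalc f xi) & near_EP P xi (fun eta => inEP v Q (fcalc f eta)).
Proof.
move=> hf hx hP; have [b [b0 b1 hb]] := inQpX_bounded hx.
have vb0 : 0 < (v b)^-1 by rewrite invr_gt0 v_gt0.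
have [N hN] := mahler_coef_vanish hf vb0.
have [Q hQ] := inQpX_common_support N (fun k => B_inQpX k hx).
have comb_Q eta : (forall k, (k < N)%N -> inEP v Q (B k eta)) ->
    inEP v Q (Bcomb N (mahler_coef f) eta).
  move=> hk j hj; rewrite /Bcomb big_seq_cond; apply: v_sum_le => // k /andP[].
  by rewrite mem_index_iota => /andP[_ /hk hkQ] _; apply: vM_le1 (mahler_coef_Zp hf k) (hkQ j hj).
exists Q; first exact: fcalc_inEP hf hx b0 hb hN (comb_Q xi hQ).
have near_B : near_EP P xi (fun eta => forall k, (k < N)%N -> inEP v Q (B k eta)).
  by apply: near_EP_all => k hk; apply: isBop_near_support (B_isBop k) hx hP (hQ k hk).
apply: near_EP_impl (near_EP_and (near_EP_bounded hP b1 hb) near_B) => eta hPe [heb hk].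
exact: fcalc_inEP hf (inEP_inQpX hPe) b0 heb hN (comb_Q eta hk).
Qed.

Lemma fcalc_near_close f P xi G c : CZpZp v f -> QX xi -> inEP v P xi -> 0 < c ->
  near_EP P xi (fun eta => close G c (fcalc f eta) (fcalc f xi)).
Proof.
move=> hf hx hP c0; have [b [b0 b1 hb]] := inQpX_bounded hx; have vb0 := v_gt0 b0.
have e0 : 0 < c / (2 * v b) by rewrite divr_gt0 // mulr_gt0.
have heb := half_divM_lt c0 vb0.
have [N hN] := mahler_coef_vanish hf e0.
have near_B : near_EP P xi (fun eta => forall k, (k < N)%N -> close G c (B k eta) (B k xi)).
  by apply: near_EP_all => k _; apply: isBop_near_close (B_isBop k) c0 hx hP.
apply: near_EP_impl (near_EP_and (near_EP_bounded hP b1 hb) near_B) => eta hPe [heb' hk] i hi.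
have he := inEP_inQpX hPe.
have -> : fcalc f eta i - fcalc f xi i =
    (fcalc f eta i - Bcomb N (mahler_coef f) eta i) - (fcalc f xi i - Bcomb N (mahler_coef f) xi i)
    + \sum_(0 <= k < N) mahler_coef f k * (B k eta i - B k xi i).
  by rewrite (eq_bigr _ (fun k _ => mulrBr _ _ _)) sumrB /Bcomb; ring.
apply: vD_lt; first by apply: vB_lt; apply: le_lt_trans heb; exact: fcalc_approx (ltW e0) hN.
rewrite big_seq_cond; apply: v_sum_lt => // k /andP[]; rewrite mem_index_iota => /andP[_ hkN] _.
exact: le_lt_trans (vM_le1 (mahler_coef_Zp hf k) (lexx _)) (hk k hkN i hi).
Qed.

Lemma fcalc_isBop f : CZpZp v f -> isBop v (fcalc f).
Proof.
move=> hf; split=> [xi|xi eta|a xi|U]; first exact: fcalc_inQpX.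
- exact: fcalc_addr.
- by move=> ha; exact: fcalc_scaler.
apply: tau_open_preimage => [P xi|P xi G c]; first exact: fcalc_near_support.
exact: fcalc_near_close.
Qed.
End BinomialOperators.
End Operators.
End PadicField.

Unset Implicit Arguments.

Theorem theorem2p21 (R : realType) (p : nat) (K : fieldType) (v : K -> R)
  (HK : is_Qp p v) (pr_p : prime p) (X : countType) (A : Op K X)
  (HA : isBop v A) (Hnc : normal_contraction v A) :
  exists pi : (K -> K) -> Op K X,
    [/\ (* pi maps C(Z_p,Z_p) into B(Q_p(X)), and is well defined on
           C(Z_p,Z_p), i.e. depends only on the restriction to Z_p *)
        forall f, CZpZp v f -> isBop v (pi f),
        forall f g, CZpZp v f -> CZpZp v g ->
          (forall x, Zp_elem v x -> f x = g x) -> eqOp v (pi f) (pi g),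
        (* Z_p-algebra homomorphism *)
        [/\ forall f g, CZpZp v f -> CZpZp v g ->
              eqOp v (pi (fun x => f x + g x)) (fun xi i => pi f xi i + pi g xi i),
            forall f g, CZpZp v f -> CZpZp v g ->
              eqOp v (pi (fun x => f x * g x)) (fun xi => pi f (pi g xi)),
            forall (a : K) f, Zp_elem v a -> CZpZp v f ->
              eqOp v (pi (fun x => a * f x)) (fun xi i => a * pi f xi i) &
            eqOp v (pi (fun _ => 1)) (fun xi => xi)],
        (* pi_A(id) = A *)
        eqOp v (pi (fun x => x)) A &
        (* contractive: ||pi f|| <= ||f||_sup *)
        forall f (c : R), CZpZp v f -> (forall x, Zp_elem v x -> v (f x) <= c) ->
          opnorm_le v (pi f) c].
Proof.
have [B /= HB] := choice _ Hnc.
exists (fcalc v B); split.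
- exact: (fcalc_isBop HK pr_p HB).
- by move=> f g _ _; exact: (fcalc_ext HK B).
- split.
  + exact: (fcalcD HK pr_p HB).
  + exact: (fcalcM HK pr_p HA HB).
  + by move=> a f _; exact: (fcalcZ HK pr_p HB).
  + exact: (fcalc_cst1 HK HB).
- exact: (fcalc_id HK HB).
- exact: (fcalc_opnorm HK pr_p HB).
Qed.
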